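(* Fix $\lambda>0$ and let $P_n = e^{-\lambda}\lambda^n/n!$. Let $\mathbb P$ be the set of compactly supported Borel probability measures on $\mathbb R$, equipped with the topology in which $\rho_n\to\rho$ iff $\int\phi\,d\rho_n\to\int\phi\,d\rho$ for every continuous compactly supported $\phi\colon\mathbb R\to\mathbb R$. For $k\geqslant 1$ let $h_k\colon\mathbb R\to\mathbb R$, $y\mapsto y/k$, and let $(h_k)_\star$ denote pushforward of measures. For $x\in\mathbb R$ define $\Sigma_x,\Sigma\colon\mathbb P\to\mathbb P$ by $$\Sigma_x(\rho) = \sum_{n=0}^\infty P_n\,(h_{n+1})_\star\big(\delta_x * \rho^{*n}\big),\qquad \Sigma(\rho) = \sum_{n=0}^\infty P_n\,(h_{n+1})_\star\big(\rho^{*(n+1)}\big),$$ where $*$ is convolution of measures, $\rho^{*n}$ the $n$-th convolution power and $\rho^{*0}=\delta_0$. Then for every $x\in\mathbb R$ the operators $\Sigma_x$ and $\Sigma$ are continuous on $\mathbb P$.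
   Context: $\delta_a$ is the Dirac measure at $a$; the series define measures via $\int\phi\,d\Sigma_x(\rho) = \sum_n P_n\int \phi(y/(n+1))\,d(\delta_x*\rho^{*n})(y)$, and similarly for $\Sigma$. *)

From HB Require Import structures.
From mathcomp Require Import all_boot all_order all_algebra.
From mathcomp Require Import all_classical all_reals all_analysis.
Set Implicit Arguments. Unset Strict Implicit. Unset Printing Implicit Defensive.
Import Order.TTheory GRing.Theory Num.Theory.
Import numFieldNormedType.Exports.
Local Open Scope classical_set_scope.
Local Open Scope ring_scope.

Section defs.
Variable R : realType.
Local Open Scope ereal_scope.

Definition poissonP (lam : R) (n : nat) : R :=
  (expR (- lam) * lam ^+ n / (n`!)%:R)%R.

Definition hdiv (k : nat) (y : R) : R := (y / k%:R)%R.

Definition mconv (m1 m2 : set R -> \bar R) : set R -> \bar R :=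
  pushforward (m1 \x m2) (fun p : R * R => (p.1 + p.2)%R).

Fixpoint convpow (rho : set R -> \bar R) (n : nat) : set R -> \bar R :=
  match n with
  | 0%N => @dirac _ R 0%R R
  | n'.+1 => mconv (convpow rho n') rho
  end.

Definition SigmaX (lam x : R) (rho : set R -> \bar R) : set R -> \bar R :=
  fun A => \sum_(0 <= n <oo)
    ((poissonP lam n)%:E * pushforward (mconv (@dirac _ R x R) (convpow rho n)) (hdiv n.+1) A).

Definition Sigma (lam : R) (rho : set R -> \bar R) : set R -> \bar R :=
  fun A => \sum_(0 <= n <oo)
    ((poissonP lam n)%:E * pushforward (convpow rho n.+1) (hdiv n.+1) A).

Definition compactly_supported (mu : set R -> \bar R) : Prop :=
  exists M : R, mu (~` `[(- M)%R, M]) = 0.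

Definition test_fun (phi : R -> R) : Prop :=
  continuous phi /\ exists M : R, forall y, (M < `|y|)%R -> phi y = 0%R.

Definition vague_cvg (mu_ : nat -> set R -> \bar R) (mu : set R -> \bar R) : Prop :=
  forall phi, test_fun phi ->
    (fun k => \int[mu_ k]_y (phi y)%:E) @ \oo --> \int[mu]_y (phi y)%:E.

Definition inP (mu : probability R R) : Prop := compactly_supported mu.

(* continuity of an operator F on P (sequential, via the defining convergence) *)
Definition continuous_on_P (F : (set R -> \bar R) -> (set R -> \bar R)) : Prop :=
  forall (rho_ : nat -> probability R R) (rho : probability R R),
    (forall k, inP (rho_ k)) -> inP rho ->
    vague_cvg (fun k => rho_ k : set R -> \bar R) rho ->
    vague_cvg (fun k => F (rho_ k)) (F rho).

End defs.

From HB Require Import structures.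
From mathcomp Require Import all_boot all_order all_algebra.
From mathcomp Require Import all_classical all_reals all_analysis.
From mathcomp Require Import measurable_realfun.
From mathcomp Require Import ring lra.
Import Order.TTheory GRing.Theory Num.Theory.
Import numFieldNormedType.Exports.
Set Implicit Arguments. Unset Strict Implicit. Unset Printing Implicit Defensive.
Local Open Scope classical_set_scope.
Local Open Scope ring_scope.

(* Both operators are Poisson mixtures sum_n P_n nu_n(rho) of probability measures,
   nu_n(rho) = (h_{n+1})_* (delta_x * rho^{*n}) resp. (h_{n+1})_* rho^{*(n+1)}.
   On R, vague convergence of probability measures implies weak convergence, since
   the limit is a probability measure and hence tight. Weak convergence is preserved
   by convolution and by pushforward along the uniformly continuous maps h_k, so each
   nu_n(rho_k) converges weakly to nu_n(rho); as the weights are summable and the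
   integrals of a test function are bounded, Tannery's theorem passes the limit
   through the series. *)

Lemma unif_continuous_comp (U V W : uniformType) (f : U -> V) (g : V -> W) :
  unif_continuous f -> unif_continuous g -> unif_continuous (g \o f).
Proof. by move=> uf ug; apply: cvg_comp uf ug. Qed.

Section unif_continuous_real.
Context {R : realType}.
Implicit Types f : R -> R.

Lemma unif_continuousPR f : unif_continuous f <->
  forall e, 0 < e -> exists2 d, 0 < d & forall x y, `|x - y| < d -> `|f x - f y| < e.
Proof.
rewrite unif_continuousP; split=> uf e /uf[d d0 fd]; exists d => //.
  by move=> x y xy; have := fd (x, y); rewrite /ball /=; apply.
by case=> x y; rewrite /ball /=; exact: fd.
Qed.

Lemma unif_continuous_continuous f : unif_continuous f -> continuous f.
Proof.
move=> /unif_continuousPR uf x; apply/cvgrPdist_lt => e /uf[d d0 fd].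
by near=> y; apply: fd; near: y; apply/nbhs_ballP; exists d.
Unshelve. all: by end_near. Qed.

Lemma lipschitz1_unif_continuous f :
  (forall x y, `|f x - f y| <= `|x - y|) -> unif_continuous f.
Proof.
by move=> fL; apply/unif_continuousPR => e e0; exists e => // x y /(le_lt_trans (fL x y)).
Qed.

Lemma mulr_unif_continuous (a : R) : unif_continuous (fun y : R => y * a).
Proof.
apply/unif_continuousPR => e e0.
have a10 : 0 < `|a| + 1 by rewrite ltr_wpDl.
exists (e / (`|a| + 1)); first by rewrite divr_gt0.
move=> x y xy; rewrite -mulrBl normrM.
have : `|x - y| * `|a| <= `|x - y| * (`|a| + 1) by rewrite ler_wpM2l ?lerDl.
by move/le_lt_trans; apply; rewrite -ltr_pdivlMr.
Qed.

Lemma addr_unif_continuous (x : R) : unif_continuous (fun y : R => x + y).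
Proof.
by apply: lipschitz1_unif_continuous => y z; have -> : x + y - (x + z) = y - z by ring.
Qed.

(* Heine-Cantor on the segment [-|M|, |M|], outside of which f vanishes. *)
Lemma compact_support_unif_continuous f (M : R) :
  continuous f -> (forall y, M < `|y| -> f y = 0) -> unif_continuous f.
Proof.
move=> cf fM; apply/unif_continuousPR => e e0.
pose K := [set` `[- `|M|, `|M|]].
pose P d x := forall y, `|x - y| < d -> `|f x - f y| < e.
have cover x : K x -> \forall x' \near x & d \near (0:R)^'+, P d x'.
  move=> _; have /cvgrPdist_lt/(_ _ (divr_gt0 e0 (ltr0n _ 2))) := cf x.
  case/nbhs_ballP => eta /= eta0 feta.
  have eta20 : 0 < eta / 2 by rewrite divr_gt0.
  near=> x' d => y /= x'y.
  have xx' : `|x - x'| < eta / 2.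
    by near: x'; apply/nbhs_ballP; exists (eta / 2) => // z; rewrite /ball.
  have d_lt : d < eta / 2 by near: d; exact: nbhs_right_lt.
  have /feta fx' : `|x - x'| < eta by lra.
  have /feta fy : `|x - y| < eta.
    rewrite (_ : x - y = (x - x') + (x' - y)); last by ring.
    by apply: (le_lt_trans (ler_normD _ _)); lra.
  rewrite (_ : f x' - f y = (f x - f y) - (f x - f x')); last by ring.
  by apply: (le_lt_trans (ler_normB _ _)); lra.
have [a /= a0 near_a] :=
  (compact_near_coveringP K).1 (@segment_compact _ _ _) _ _ P _ cover.
have a20 : 0 < a / 2 by rewrite divr_gt0.
have near_K : K `<=` P (a / 2).
  by apply: near_a a20; rewrite /ball_ /= sub0r normrN gtr0_norm //; lra.
have in_K z : `|z| <= `|M| -> K z.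
  by move=> z_le; rewrite /K /= in_itv /= -ler_norml.
exists (a / 2) => // x y xy.
have [x_le|x_gt] := lerP `|x| `|M|; first exact: near_K (in_K _ x_le) _ xy.
have [y_le|y_gt] := lerP `|y| `|M|.
  by rewrite distrC; apply: near_K (in_K _ y_le) _ _; rewrite distrC.
have M_le := ler_norm M.
by rewrite !fM ?subrr ?normr0 //; lra.
Unshelve. all: by end_near. Qed.

Lemma compact_support_bounded f (M : R) :
  continuous f -> (forall y, M < `|y| -> f y = 0) -> exists C, forall y, `|f y| <= C.
Proof.
move=> cf fM.
have cnf : continuous (fun y => `|f y|).
  by move=> x; apply: continuous_comp; [exact: cf | exact: norm_continuous].
have [c _ c_max] := EVT_max (ge0_cp (normr_ge0 M)).2 (continuous_subspaceT cnf).
exists `|f c| => y; have [y_le|y_gt] := lerP `|y| `|M|.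
  by apply: c_max; rewrite in_itv /= -ler_norml.
by rewrite fM ?normr0 // (le_lt_trans (ler_norm M)).
Qed.

End unif_continuous_real.

Section cutoff.
Context {R : realType}.

Definition cutoff (M y : R) : R := Num.min 1 (Num.max 0 (M + 1 - `|y|)).

Lemma cutoff_ge0 M y : 0 <= cutoff M y.
Proof. by rewrite /cutoff le_min ler01 le_max lexx. Qed.

Lemma cutoff_le1 M y : cutoff M y <= 1.
Proof. by rewrite /cutoff ge_min lexx. Qed.

Lemma cutoff_eq1 M y : `|y| <= M -> cutoff M y = 1.
Proof. by move=> yM; rewrite /cutoff (@max_r _ _ 0) ?min_l //; lra. Qed.

Lemma cutoff_eq0 M y : M + 1 <= `|y| -> cutoff M y = 0.
Proof. by move=> yM; rewrite /cutoff max_l ?min_r //; lra. Qed.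

Lemma cutoff_lipschitz M y z : `|cutoff M y - cutoff M z| <= `|y - z|.
Proof.
apply: le_trans (ler_dist_dist y z).
have := ler_norm (`|y| - `|z|); have := ler_norm (`|z| - `|y|).
rewrite (distrC `|z|) /cutoff ler_norml => yz zy.
case: (leP 0 (M + 1 - `|y|)) => y0; case: (leP 0 (M + 1 - `|z|)) => z0;
rewrite ?(max_r (ltW _)) ?max_l ?max_r //;
case: (leP 1 (M + 1 - `|y|)) => y1; case: (leP 1 (M + 1 - `|z|)) => z1;
rewrite ?(min_r (ltW _)) ?min_l ?min_r ?(min_l (ltW _)) //; apply/andP; split; lra.
Qed.

Lemma cutoff_unif_continuous M : unif_continuous (cutoff M).
Proof. exact/lipschitz1_unif_continuous/cutoff_lipschitz. Qed.

End cutoff.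

Section test_functions.
Context {R : realType}.
Implicit Types f g : R -> R.

Definition bounded_unif_continuous f :=
  (exists C, forall x, `|f x| <= C) /\ unif_continuous f.

Lemma test_fun_bounded_unif_continuous f :
  test_fun f -> bounded_unif_continuous f.
Proof.
case=> cf [M fM]; split; first exact: compact_support_bounded cf fM.
exact: compact_support_unif_continuous cf fM.
Qed.

Lemma bounded_unif_continuous_measurable f :
  bounded_unif_continuous f -> measurable_fun setT f.
Proof. by case=> _ /unif_continuous_continuous/continuous_measurable_fun. Qed.

Lemma bounded_unif_continuous_comp f g :
  unif_continuous g -> bounded_unif_continuous f -> bounded_unif_continuous (f \o g).
Proof.
by move=> ug [[C fC] uf]; split; [exists C => x; exact: fC | exact: unif_continuous_comp].
Qed.

Lemma test_fun_funrpos f : test_fun f -> test_fun f^\+.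
Proof.
case=> cf [M fM]; split.
  by move=> x; apply: continuous_max; [exact: cf | exact: cst_continuous].
by exists M => y /fM; rewrite /funrpos => ->; rewrite maxxx.
Qed.

Lemma test_fun_funrneg f : test_fun f -> test_fun f^\-.
Proof.
case=> cf [M fM]; rewrite -funrposN; apply: test_fun_funrpos; split.
  by move=> x; apply: continuousN; exact: cf.
by exists M => y /fM /= ->; rewrite oppr0.
Qed.

Lemma test_fun_mul_cutoff f M : continuous f -> test_fun (fun y => f y * cutoff M y).
Proof.
move=> cf; split.
  move=> x; apply: cvgM; first exact: cf.
  exact: unif_continuous_continuous (cutoff_unif_continuous M) x.
by exists (M + 1) => y /ltW/cutoff_eq0 ->; rewrite mulr0.
Qed.

Lemma test_fun_cutoff (M : R) : test_fun (cutoff M).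
Proof.
split; first exact/unif_continuous_continuous/cutoff_unif_continuous.
by exists (M + 1) => y /ltW/cutoff_eq0.
Qed.

Lemma measurable_cutoff (M : R) : measurable_fun setT (cutoff M).
Proof.
exact: bounded_unif_continuous_measurable
  (test_fun_bounded_unif_continuous (test_fun_cutoff M)).
Qed.

End test_functions.

Lemma bounded_fun_le {T : Type} {R : realType} (f : T -> R) C :
  (forall x, `|f x| <= C) -> [bounded f x | x in setT].
Proof.
move=> fC; rewrite /bounded_near; near=> M => x _ /=; apply: le_trans (fC x) _.
by near: M; apply: nbhs_pinfty_ge; exact: num_real.
Unshelve. all: by end_near. Qed.

Section probability_Rintegral.
Context d (T : measurableType d) (R : realType) (mu : probability T R).
Implicit Types (f g : T -> R) (C : R).

Lemma bounded_integrable f C : measurable_fun setT f ->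
  (forall x, `|f x| <= C) -> mu.-integrable setT (EFin \o f).
Proof.
move=> mf fC; apply: measurable_bounded_integrable => //.
  exact: (le_lt_trans (probability_le1 mu measurableT) (ltry 1)).
exact: bounded_fun_le fC.
Qed.

Lemma EFin_Rintegral f C : measurable_fun setT f -> (forall x, `|f x| <= C) ->
  (\int[mu]_x f x)%:E = (\int[mu]_x (f x)%:E)%E.
Proof.
by move=> mf fC; rewrite fineK // integrable_fin_num // (bounded_integrable mf fC).
Qed.

Lemma Rintegral_cst1 (c : R) : \int[mu]_x c = c.
Proof. by rewrite Rintegral_cst // -[fine _]/(fine (mu setT)) probability_setT mulr1. Qed.

Lemma normr_Rintegral_le f C : measurable_fun setT f ->
  (forall x, `|f x| <= C) -> `|\int[mu]_x f x| <= C.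
Proof.
move=> mf fC; have intf := bounded_integrable mf fC.
apply: le_trans (le_normr_Rintegral _ intf) _ => //.
rewrite -[leRHS](Rintegral_cst1 C); apply: le_Rintegral => //.
- exact: integrable_norm.
- exact: finite_measure_integrable_cst.
Qed.

Lemma Rintegral_distribution d' (T' : measurableType d') (g : {mfun T >-> T'})
    (f : T' -> R) C : measurable_fun setT f -> (forall y, `|f y| <= C) ->
  \int[distribution mu g]_y f y = \int[mu]_x f (g x).
Proof.
move=> mf fC; rewrite /Rintegral /distribution integral_pushforward ?preimage_setT //.
- exact/measurable_EFinP.
- by apply: (bounded_integrable _ (fun x => fC (g x))); exact: measurableT_comp.
Qed.

End probability_Rintegral.

Section tightness.
Context {R : realType} (mu : probability R R).
Implicit Types (f g : R -> R) (C M : R).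

Lemma Rintegral_cutoff_cvg : \int[mu]_y cutoff n%:R y @[n --> \oo] --> (1 : R).
Proof.
have [] := @dominated_convergence _ _ _ mu setT measurableT
  (fun n y => (cutoff n%:R y)%:E) (cst 1%E) (cst 1%E).
- by move=> n; apply/measurable_EFinP; exact: measurable_cutoff.
- exact: measurable_cst.
- apply: aeW => y _; apply: cvg_near_cst; near=> n.
  rewrite cutoff_eq1 //; near: n; exact: nbhs_infty_ger.
- exact: finite_measure_integrable_cst.
- by apply: aeW => y n _; rewrite /= lee_fin ger0_norm ?cutoff_ge0 ?cutoff_le1.
move=> _ _; rewrite integral_cst // -[X in (1 * X)%E]/(mu setT) probability_setT mul1e.
exact: fine_cvg.
Unshelve. all: by end_near. Qed.

Lemma probability_tight e : 0 < e -> exists M, 1 - \int[mu]_y cutoff M y < e.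
Proof.
move=> e0; near \oo => n; exists n%:R.
apply: le_lt_trans (ler_norm _) _; near: n.
exact: cvgr_dist_lt Rintegral_cutoff_cvg _ e0.
Unshelve. all: by end_near. Qed.

Lemma Rintegral_cutoff_error f C M : measurable_fun setT f ->
  (forall y, `|f y| <= C) ->
  `|\int[mu]_y f y - \int[mu]_y (f y * cutoff M y)|
    <= C * (1 - \int[mu]_y cutoff M y).
Proof.
move=> mf fC; have C0 : 0 <= C := le_trans (normr_ge0 _) (fC 0).
have mc := measurable_cutoff M.
have c_le y : `|cutoff M y| <= 1 by rewrite ger0_norm ?cutoff_ge0 ?cutoff_le1.
have c'_ge0 y : 0 <= 1 - cutoff M y by rewrite subr_ge0 cutoff_le1.
have c'_le y : `|1 - cutoff M y| <= 1.
  by rewrite ger0_norm // lerBlDr lerDl cutoff_ge0.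
have fc_le y : `|f y * cutoff M y| <= C.
  by rewrite normrM -[C]mulr1 ler_pM.
have mfc : measurable_fun setT (fun y => f y * cutoff M y) by exact: measurable_funM.
have int_f := bounded_integrable mu mf fC.
have int_fc := bounded_integrable mu mfc fc_le.
have int_fBfc : mu.-integrable setT (EFin \o (fun y => f y - f y * cutoff M y)).
  apply: (bounded_integrable mu (C := C + C)); first exact: measurable_funB.
  by move=> y; apply: le_trans (ler_normB _ _) _; rewrite lerD.
have int_c := bounded_integrable mu mc c_le.
have int_c' : mu.-integrable setT (EFin \o (fun y => 1 - cutoff M y)).
  by apply: (bounded_integrable mu _ c'_le); exact: measurable_funB.
have int_Cc' : mu.-integrable setT (EFin \o (fun y => C * (1 - cutoff M y))).
  apply: (bounded_integrable mu (C := C * 1)).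
    by apply: measurable_funM => //; exact: measurable_funB.
  by move=> y; rewrite normrM ger0_norm //; exact: ler_wpM2l.
rewrite -(RintegralB measurableT int_f int_fc).
apply: le_trans (le_normr_Rintegral measurableT int_fBfc) _.
apply: le_trans (le_Rintegral measurableT (integrable_norm int_fBfc) int_Cc' _) _.
  move=> y _ /=; rewrite -{1}[f y]mulr1 -mulrBr normrM (ger0_norm (c'_ge0 y)).
  exact: ler_wpM2r.
rewrite RintegralZl // (RintegralB measurableT _ int_c) ?Rintegral_cst1 //.
exact: finite_measure_integrable_cst.
Qed.

Lemma normr_Rintegral_le_cutoff g C M e : measurable_fun setT g ->
  (forall y, `|g y| <= C) -> 0 <= e -> (forall y, `|y| <= M + 1 -> `|g y| <= e) ->
  `|\int[mu]_y g y| <= e + C * (1 - \int[mu]_y cutoff M y).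
Proof.
move=> mg gC e0 ge.
have local : `|\int[mu]_y (g y * cutoff M y)| <= e.
  apply: normr_Rintegral_le.
    by apply: measurable_funM => //; exact: measurable_cutoff.
  move=> y; have [yM|yM] := lerP `|y| (M + 1).
    rewrite normrM (ger0_norm (cutoff_ge0 _ _)).
    exact: le_trans (ler_piMr (normr_ge0 _) (cutoff_le1 _ _)) (ge _ yM).
  by rewrite cutoff_eq0 ?mulr0 ?normr0 // ltW.
move: (Rintegral_cutoff_error M mg gC) local.
by rewrite !ler_norml => /andP[? ?] /andP[? ?]; apply/andP; split; lra.
Qed.

End tightness.

Section convolution.
Context {R : realType}.

Definition add_pair (p : R * R) : R := p.1 + p.2.

Lemma measurable_add_pair : measurable_fun setT add_pair.
Proof. by apply: measurable_funD; [exact: measurable_fst | exact: measurable_snd]. Qed.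

HB.instance Definition _ := isMeasurableFun.Build _ _ _ _ add_pair measurable_add_pair.

Lemma measurable_shift (f : R -> R) (y : R) :
  measurable_fun setT f -> measurable_fun setT (fun z => f (y + z)).
Proof. by move=> mf; apply: measurableT_comp => //; exact: measurable_funD. Qed.

Definition pconv (mu rho : probability R R) : probability R R :=
  distribution (mu \x rho)%E add_pair.

Fixpoint pconvpow (rho : probability R R) (n : nat) : probability R R :=
  if n is n'.+1 then pconv (pconvpow rho n') rho else @dirac _ R 0 R.

Lemma convpowE (rho : probability R R) n : convpow rho n = pconvpow rho n.
Proof. by elim: n => //= n ->. Qed.

Lemma Rintegral_pconv (mu rho : probability R R) (f : R -> R) C :
  measurable_fun setT f -> (forall x, `|f x| <= C) ->
  \int[pconv mu rho]_x f x = \int[mu]_y \int[rho]_z f (y + z).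
Proof.
move=> mf fC; rewrite (Rintegral_distribution _ _ mf fC) /Rintegral.
rewrite -integral12_prod_meas1; last first.
  by apply: (bounded_integrable _ _ (fun p => fC (add_pair p))); exact: measurableT_comp.
congr fine; apply: eq_integral => y _.
by rewrite /fubini_F -(EFin_Rintegral rho (measurable_shift y mf) (fun z => fC _)).
Qed.

End convolution.

Section weak_convergence.
Context {R : realType}.
Implicit Types (mu rho : probability R R).

(* By the portmanteau theorem, bounded uniformly continuous test functions
   characterize weak convergence. *)
Definition weak_cvg (mu_ : nat -> probability R R) mu :=
  forall f, bounded_unif_continuous f ->
    \int[mu_ k]_x f x @[k --> \oo] --> \int[mu]_x f x.

Lemma weak_cvg_cst mu : weak_cvg (fun=> mu) mu.
Proof. by move=> f _; exact: cvg_cst. Qed.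

Lemma vague_cvg_Rintegral (rho_ : nat -> probability R R) rho (phi : R -> R) :
  vague_cvg (fun k => rho_ k : set R -> \bar R) rho -> test_fun phi ->
  \int[rho_ k]_y phi y @[k --> \oo] --> \int[rho]_y phi y.
Proof.
move=> V tphi; have bphi := test_fun_bounded_unif_continuous tphi.
have mphi := bounded_unif_continuous_measurable bphi; have [[C phiC] _] := bphi.
have := V phi tphi; rewrite -(EFin_Rintegral rho mphi phiC).
under eq_fun do rewrite -(EFin_Rintegral _ mphi phiC).
exact: fine_cvg.
Qed.

Lemma vague_cvg_weak_cvg (rho_ : nat -> probability R R) rho :
  vague_cvg (fun k => rho_ k : set R -> \bar R) rho -> weak_cvg rho_ rho.
Proof.
move=> V f bf; have mf := bounded_unif_continuous_measurable bf.
have [[C fC] uf] := bf; have C0 : 0 <= C := le_trans (normr_ge0 _) (fC 0).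
apply/cvgrPdist_lt => e e0; have e4 : 0 < e / 4 by rewrite divr_gt0.
pose q := e / (4 * (C + 1)).
have q0 : 0 < q by rewrite divr_gt0 // mulr_gt0 // ltr_wpDl.
have Cq : C * q <= e / 4.
  have -> : C * q = e / 4 * (C / (C + 1)) by rewrite /q; field; lra.
  by apply: ler_piMr (ltW e4) _; rewrite ler_pdivrMr ?mul1r; lra.
have [M tightM] := probability_tight rho q0.
have err nu := Rintegral_cutoff_error nu M mf fC.
near=> k.
have c_near : `|\int[rho]_y cutoff M y - \int[rho_ k]_y cutoff M y| < q.
  by near: k; exact: cvgr_dist_lt (vague_cvg_Rintegral V (test_fun_cutoff M)) _ q0.
have fc_near :
    `|\int[rho]_y (f y * cutoff M y) - \int[rho_ k]_y (f y * cutoff M y)| < e / 4.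
  near: k; apply: cvgr_dist_lt e4.
  exact: vague_cvg_Rintegral V (test_fun_mul_cutoff M (unif_continuous_continuous uf)).
have Ck : C * (1 - \int[rho_ k]_y cutoff M y) <= C * (2 * q).
  by apply: (ler_wpM2l C0); move: c_near; rewrite ltr_norml => /andP[? ?]; lra.
have C1 : C * (1 - \int[rho]_y cutoff M y) <= C * q by apply: (ler_wpM2l C0); exact: ltW.
move: (err rho) (err (rho_ k)) c_near fc_near Ck C1.
rewrite !ler_norml !ltr_norml => /andP[? ?] /andP[? ?] /andP[? ?] /andP[? ?] ? ?.
apply/andP; split; nra.
Unshelve. all: by end_near. Qed.

Lemma weak_cvg_tight (mu_ : nat -> probability R R) mu e :
  weak_cvg mu_ mu -> 0 < e ->
  exists M, \forall k \near \oo, 1 - \int[mu_ k]_y cutoff M y < e.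
Proof.
move=> W e0; have e2 : 0 < e / 2 by rewrite divr_gt0.
have [M tightM] := probability_tight mu e2; exists M.
have /cvgr_dist_lt/(_ _ e2) := W _ (test_fun_bounded_unif_continuous (test_fun_cutoff M)).
by apply: filterS => k; rewrite ltr_norml => /andP[? ?]; lra.
Qed.

Lemma Rintegral_shift_equicontinuous (f : R -> R) : bounded_unif_continuous f ->
  forall e, 0 < e -> exists2 d, 0 < d & forall rho x x', `|x - x'| < d ->
    `|\int[rho]_z f (x + z) - \int[rho]_z f (x' + z)| < e.
Proof.
move=> bf e e0; have mf := bounded_unif_continuous_measurable bf.
have [[C fC] /unif_continuousPR uf] := bf.
have e2 : 0 < e / 2 by rewrite divr_gt0.
have [d d0 fd] := uf _ e2; exists d => // rho x x' xx'.
have int_shift y := bounded_integrable rho (measurable_shift y mf) (fun z => fC (y + z)).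
rewrite -(RintegralB measurableT (int_shift x) (int_shift x')).
apply: le_lt_trans (normr_Rintegral_le rho _ (C := e / 2) _) _; last by lra.
  by apply: measurable_funB; exact: measurable_shift.
by move=> z; apply/ltW/fd; have -> : x + z - (x' + z) = x - x' by ring.
Qed.

Lemma bounded_unif_continuous_Rintegral_shift rho (f : R -> R) :
  bounded_unif_continuous f -> bounded_unif_continuous (fun y => \int[rho]_z f (y + z)).
Proof.
move=> bf; have mf := bounded_unif_continuous_measurable bf.
have [[C fC] _] := bf; split.
  by exists C => y; apply: normr_Rintegral_le (measurable_shift y mf) (fun z => fC _).
apply/unif_continuousPR => e /(Rintegral_shift_equicontinuous bf)[d d0 equi].
by exists d => // x x'; exact: equi.
Qed.

(* Equicontinuity upgrades pointwise to uniform convergence on compact sets. *)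
Lemma weak_cvg_Rintegral_shift_unif (rho_ : nat -> probability R R) rho (f : R -> R) K e :
  weak_cvg rho_ rho -> bounded_unif_continuous f -> 0 < e ->
  \forall k \near \oo, forall y, `|y| <= K ->
    `|\int[rho]_z f (y + z) - \int[rho_ k]_z f (y + z)| < e.
Proof.
move=> W bf e0; have e3 : 0 < e / 3 by rewrite divr_gt0.
have [d d0 equi] := Rintegral_shift_equicontinuous bf e3.
pose P k y := `|\int[rho]_z f (y + z) - \int[rho_ k]_z f (y + z)| < e.
have cover x : [set` `[- K, K]] x -> \forall x' \near x & k \near \oo, P k x'.
  move=> _; have bfx := bounded_unif_continuous_comp (addr_unif_continuous x) bf.
  near=> x' k.
  have xx' : `|x - x'| < d by near: x'; apply/nbhs_ballP; exists d.
  have := equi rho _ _ xx'; have := equi (rho_ k) _ _ xx'.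
  have : `|\int[rho]_z f (x + z) - \int[rho_ k]_z f (x + z)| < e / 3.
    by near: k; exact: cvgr_dist_lt (W _ bfx) _ e3.
  rewrite /P !ltr_norml => /andP[? ?] /andP[? ?] /andP[? ?].
  by apply/andP; split; lra.
apply: filterS ((compact_near_coveringP _).1 (@segment_compact _ (- K) K) _ _ P _ cover).
by move=> k PK y yK; apply: PK; rewrite /= in_itv /= -ler_norml.
Unshelve. all: by end_near. Qed.

End weak_convergence.

Section weak_convergence_operations.
Context {R : realType}.
Implicit Types (mu rho : probability R R).

(* On a compact set the inner integrals converge uniformly; tightness of [mu_]
   controls the rest. *)
Lemma weak_cvg_pconv (mu_ rho_ : nat -> probability R R) mu rho :
  weak_cvg mu_ mu -> weak_cvg rho_ rho ->
  weak_cvg (fun k => pconv (mu_ k) (rho_ k)) (pconv mu rho).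
Proof.
move=> Wmu Wrho f bf; have mf := bounded_unif_continuous_measurable bf.
have [[C fC] _] := bf; have C0 : 0 <= C := le_trans (normr_ge0 _) (fC 0).
pose G (nu : probability R R) (y : R) := \int[nu]_z f (y + z).
have bG nu : bounded_unif_continuous (G nu) :=
  bounded_unif_continuous_Rintegral_shift nu bf.
have mG nu := bounded_unif_continuous_measurable (bG nu).
have G_le nu y : `|G nu y| <= C.
  exact: normr_Rintegral_le (measurable_shift y mf) (fun z => fC _).
rewrite (Rintegral_pconv _ _ mf fC); under eq_fun do rewrite (Rintegral_pconv _ _ mf fC).
apply/cvgrPdist_lt => e e0; have e4 : 0 < e / 4 by rewrite divr_gt0.
pose q := e / (4 * (C + 1)).
have q0 : 0 < q by rewrite divr_gt0 // mulr_gt0 // ltr_wpDl.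
have Cq : (C + C) * q <= e / 2.
  have -> : (C + C) * q = e / 2 * (C / (C + 1)) by rewrite /q; field; lra.
  by apply: ler_piMr (ltW _) _; rewrite ?divr_gt0 // ler_pdivrMr ?mul1r; lra.
have [M tightM] := weak_cvg_tight Wmu q0.
near=> k.
have GB_le y : `|G rho y - G (rho_ k) y| <= C + C.
  by apply: le_trans (ler_normB _ _) _; rewrite lerD.
have unif_k : forall y, `|y| <= M + 1 -> `|G rho y - G (rho_ k) y| < e / 4.
  by near: k; exact: weak_cvg_Rintegral_shift_unif.
have := normr_Rintegral_le_cutoff (mu_ k) (measurable_funB (mG rho) (mG (rho_ k)))
  GB_le (ltW e4) (fun y yM => ltW (unif_k y yM)).
rewrite (RintegralB measurableT (bounded_integrable _ (mG rho) (G_le rho))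
  (bounded_integrable _ (mG (rho_ k)) (G_le (rho_ k)))).
have tight_k : 1 - \int[mu_ k]_y cutoff M y < q by near: k; exact: tightM.
have G_k : `|\int[mu]_y G rho y - \int[mu_ k]_y G rho y| < e / 4.
  by near: k; exact: cvgr_dist_lt (Wmu _ (bG rho)) _ e4.
have Cerr : (C + C) * (1 - \int[mu_ k]_y cutoff M y) <= (C + C) * q.
  by apply: (ler_wpM2l (addr_ge0 C0 C0)); exact: ltW.
move: G_k; rewrite !ler_norml !ltr_norml => /andP[? ?] /andP[? ?].
by apply/andP; split; lra.
Unshelve. all: by end_near. Qed.

Lemma weak_cvg_pconvpow (rho_ : nat -> probability R R) rho n :
  weak_cvg rho_ rho -> weak_cvg (fun k => pconvpow (rho_ k) n) (pconvpow rho n).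
Proof. by move=> W; elim: n => [|n IH]; [exact: weak_cvg_cst | exact: weak_cvg_pconv]. Qed.

Lemma weak_cvg_distribution (mu_ : nat -> probability R R) mu (g : {mfun R >-> R}) :
  unif_continuous g -> weak_cvg mu_ mu ->
  weak_cvg (fun k => distribution (mu_ k) g) (distribution mu g).
Proof.
move=> ug W f bf; have mf := bounded_unif_continuous_measurable bf.
have [[C fC] _] := bf; rewrite (Rintegral_distribution _ _ mf fC).
under eq_fun do rewrite (Rintegral_distribution _ _ mf fC).
exact: W _ (bounded_unif_continuous_comp ug bf).
Qed.

End weak_convergence_operations.

Lemma tannery {R : realType} (p : nat -> R) (C : R) (a : nat -> nat -> R) (b : nat -> R) :
  (forall n, 0 <= p n) -> (\sum_(n <oo) (p n)%:E < +oo)%E ->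
  (forall k n, 0 <= a k n <= C) -> (forall n, a ^~ n @ \oo --> b n) ->
  (\sum_(n <oo) (p n * a k n)%:E)%E @[k --> \oo] --> (\sum_(n <oo) (p n * b n)%:E)%E.
Proof.
move=> p0 psum a_bnd ab.
have b0 n : 0 <= b n.
  rewrite -(cvg_lim _ (ab n)) //; apply: limr_ge; first exact: cvgP (ab n).
  by apply: nearW => k; case/andP: (a_bnd k n).
have C0 : 0 <= C by case/andP: (a_bnd 0%N 0%N) => a0; exact: le_trans.
have [] := @dominated_convergence _ _ _ counting setT measurableT
  (fun k n => (p n * a k n)%:E) (fun n => (p n * b n)%:E) (fun n => (p n * C)%:E).
- by [].
- by [].
- apply: aeW => n _; apply: cvg_EFin; first exact: nearW.
  exact: cvgM (cvg_cst _) (ab n).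
- apply/integrableP; split => //.
  rewrite ge0_integral_count //.
  under eq_eseriesr do rewrite gee0_abs ?lee_fin ?mulr_ge0 //.
  under eq_eseriesr do rewrite EFinM muleC.
  by rewrite nneseriesZl => [|n _]; [rewrite lte_mul_pinfty ?lee_fin | rewrite lee_fin].
- apply: aeW => n k _; have /andP[a0 aC] := a_bnd k n.
  by rewrite gee0_abs ?lee_fin ?mulr_ge0 //; exact: (ler_wpM2l (p0 n)).
have pa0 k n : (0 <= (p n * a k n)%:E)%E.
  by rewrite lee_fin mulr_ge0 //; case/andP: (a_bnd k n).
move=> _ _; rewrite ge0_integral_count => [|n]; last by rewrite lee_fin mulr_ge0.
suff -> : (fun k => \int[counting]_n (p n * a k n)%:E)%E =
    (fun k => \sum_(n <oo) (p n * a k n)%:E)%E by [].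
by apply/funext => k; exact: ge0_integral_count.
Qed.

Section mixture.
Context d (T : measurableType d) (R : realType).

Definition mixture (w : nat -> {nonneg R}) (nu : nat -> probability T R) :=
  mseries (fun n => mscale (w n) (nu n)) 0.

Lemma mixture_setT w nu : mixture w nu setT = (\sum_(n <oo) ((w n)%:num)%:E)%E.
Proof.
apply: eq_eseriesr => n _; change (((w n)%:num)%:E * nu n setT = ((w n)%:num)%:E)%E.
by rewrite probability_setT mule1.
Qed.

Lemma ge0_integral_mixture w nu (g : T -> R) C : measurable_fun setT g ->
  (forall x, 0 <= g x <= C) ->
  (\int[mixture w nu]_x (g x)%:E = \sum_(n <oo) ((w n)%:num * \int[nu n]_x g x)%:E)%E.
Proof.
move=> mg gC; have g_le x : `|g x| <= C by case/andP: (gC x) => g0; rewrite ger0_norm.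
rewrite ge0_integral_measure_series //; last 2 first.
  by move=> x _; rewrite lee_fin; case/andP: (gC x).
  exact/measurable_EFinP.
apply: eq_eseriesr => n _; rewrite ge0_integral_mscale //; last 2 first.
  exact/measurable_EFinP.
  by move=> x _; rewrite lee_fin; case/andP: (gC x).
by rewrite EFinM (EFin_Rintegral _ mg g_le).
Qed.

End mixture.

Section mixture_continuity.
Context {R : realType}.

Lemma vague_cvg_mixture (w : nat -> {nonneg R})
    (nu_ : nat -> nat -> probability R R) (nu : nat -> probability R R) :
  (\sum_(n <oo) ((w n)%:num)%:E < +oo)%E -> (forall n, weak_cvg (nu_ ^~ n) (nu n)) ->
  vague_cvg (fun k => mixture w (nu_ k) : set R -> \bar R) (mixture w nu).
Proof.
move=> wsum W phi tphi.
have pos_part g : test_fun g -> (forall x, 0 <= g x) ->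
    (\int[mixture w (nu_ k)]_x (g x)%:E @[k --> \oo] --> \int[mixture w nu]_x (g x)%:E)%E.
  move=> tg g0; have bg := test_fun_bounded_unif_continuous tg.
  have mg := bounded_unif_continuous_measurable bg; have [[C gC] _] := bg.
  have gC' x : 0 <= g x <= C by rewrite g0 (le_trans (ler_norm _)).
  rewrite (ge0_integral_mixture _ _ mg gC').
  under eq_fun do rewrite (ge0_integral_mixture _ _ mg gC').
  apply: (tannery (C := C)) => // [k n|n]; last exact: W.
  rewrite Rintegral_ge0 => [|x _]; last exact: g0.
  exact: le_trans (ler_norm _) (normr_Rintegral_le _ mg gC).
have fin_neg : (\int[mixture w nu]_x (phi^\- x)%:E)%E \is a fin_num.
  have bneg := test_fun_bounded_unif_continuous (test_fun_funrneg tphi).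
  have [[C phiC] _] := bneg.
  apply/integrable_fin_num/measurable_bounded_integrable => //.
  - by rewrite -(mixture_setT w nu) in wsum.
  - exact: bounded_unif_continuous_measurable bneg.
  - exact: bounded_fun_le phiC.
rewrite integralE funerpos funerneg; under eq_fun do rewrite integralE funerpos funerneg.
apply: cvgeB; first by apply: fin_num_adde_defl; rewrite fin_numN; exact: fin_neg.
  exact: pos_part (test_fun_funrpos tphi) (funrpos_ge0 _).
exact: pos_part (test_fun_funrneg tphi) (funrneg_ge0 _).
Qed.

Lemma continuous_on_P_mixture (w : nat -> {nonneg R})
    (F : (set R -> \bar R) -> set R -> \bar R)
    (nu : probability R R -> nat -> probability R R) :
  (\sum_(n <oo) ((w n)%:num)%:E < +oo)%E ->
  (forall rho : probability R R, F rho = mixture w (nu rho)) ->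
  (forall (rho_ : nat -> probability R R) rho n,
    weak_cvg rho_ rho -> weak_cvg (fun k => nu (rho_ k) n) (nu rho n)) ->
  continuous_on_P F.
Proof.
move=> wsum FE Wnu rho_ rho _ _ /vague_cvg_weak_cvg W.
have -> : (fun k => F (rho_ k)) = (fun k => mixture w (nu (rho_ k)) : set R -> \bar R).
  by apply/funext => k; exact: FE.
by rewrite FE; apply: vague_cvg_mixture wsum _ => n; exact: Wnu.
Qed.

End mixture_continuity.

Section poisson.
Context {R : realType}.

Lemma poissonP_ge0 (lam : R) n : 0 <= lam -> 0 <= poissonP lam n.
Proof. by move=> lam0; rewrite /poissonP !mulr_ge0 ?expR_ge0 ?exprn_ge0 ?invr_ge0. Qed.

Lemma poissonP_sum (lam : R) : (\sum_(n <oo) (poissonP lam n)%:E = 1)%E.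
Proof.
have -> : (fun n => \sum_(0 <= k < n) (poissonP lam k)%:E)%E =
    (fun n => (expR (- lam) * series (exp_coeff lam) n)%:E).
  apply/funext => n; rewrite sumEFin mulr_sumr; congr EFin.
  by apply: eq_bigr => k _; rewrite /poissonP /exp_coeff mulrA.
apply/cvg_lim => //; apply: cvg_EFin; first exact: nearW.
rewrite -[1](mulVf (lt0r_neq0 (expR_gt0 lam))) -expRN.
exact: cvgMr (is_cvg_series_exp_coeff lam).
Qed.

Definition poisson_weight (lam : R) (lam0 : 0 <= lam) n : {nonneg R} :=
  NngNum (poissonP_ge0 n lam0).

Lemma measurable_hdiv k : measurable_fun setT (@hdiv R k).
Proof. exact: measurable_funM. Qed.

HB.instance Definition _ k :=
  isMeasurableFun.Build _ _ _ _ (@hdiv R k) (measurable_hdiv k).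

Lemma hdiv_unif_continuous k : unif_continuous (@hdiv R k).
Proof. exact: mulr_unif_continuous. Qed.

Lemma SigmaXE (lam : R) (lam0 : 0 <= lam) x (rho : probability R R) :
  SigmaX lam x rho = mixture (poisson_weight lam0)
    (fun n => distribution (pconv (@dirac _ R x R) (pconvpow rho n)) (@hdiv R n.+1)).
Proof. by apply/funext => A; apply: eq_eseriesr => n _; rewrite convpowE. Qed.

Lemma SigmaE (lam : R) (lam0 : 0 <= lam) (rho : probability R R) :
  Sigma lam rho = mixture (poisson_weight lam0)
    (fun n => distribution (pconvpow rho n.+1) (@hdiv R n.+1)).
Proof. by apply/funext => A; apply: eq_eseriesr => n _; rewrite convpowE. Qed.

End poisson.

Unset Implicit Arguments.

Theorem theorem3 (R : realType) (lam : R) (hlam : 0 < lam) :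
  (forall x : R, continuous_on_P (SigmaX lam x)) /\ continuous_on_P (Sigma lam).
Proof.
have lam0 := ltW hlam.
have wsum : (\sum_(n <oo) ((poisson_weight lam0 n)%:num)%:E < +oo)%E.
  by rewrite poissonP_sum ltry.
have W_hdiv n := weak_cvg_distribution (hdiv_unif_continuous n.+1).
split => [x|].
  apply: continuous_on_P_mixture wsum (SigmaXE lam0 x) _ => rho_ rho n W.
  by apply/W_hdiv/weak_cvg_pconv/weak_cvg_pconvpow; [exact: weak_cvg_cst|].
apply: continuous_on_P_mixture wsum (SigmaE lam0) _ => rho_ rho n W.
exact/W_hdiv/weak_cvg_pconvpow.
Qed.
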